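(* Let $R$ be a ring, $S_0(R)$ the largest element of $\mathrm{Den}(R,0)$ and $Q(R)=S_0(R)^{-1}R=RS_0(R)^{-1}$ with group of units $Q(R)^*$. Then: (1) $S_0(Q(R))=Q(R)^*$ and $S_0(Q(R))\cap R=S_0(R)$; (2) $Q(R)^*$ is generated by $S_0(R)$ and $\{s^{-1}\mid s\in S_0(R)\}$; (3) $Q(R)^*=\{s^{-1}t\mid s,t\in S_0(R)\}=\{ts^{-1}\mid s,t\in S_0(R)\}$; (4) $Q(Q(R))=Q(R)$.
   Context: Rings are associative with $1$. A multiplicatively closed subset $S$ ($1\in S$, $0\notin S$) is a left (resp. right) Ore set if $Sr\cap Rs\ne\emptyset$ (resp. $rS\cap sR\ne\emptyset$) for all $r,s$ with $s\in S$; it is a left denominator set if it is left Ore and $rs=0$ ($s\in S$) implies $tr=0$ for some $t\in S$; right denominator sets are defined symmetrically. $\mathrm{Den}(R,0)$ is the set of subsets which are both left and right denominator sets and consist of regular elements; it has a largest element $S_0(R)$, and $Q(R):=S_0(R)^{-1}R\cong RS_0(R)^{-1}$ is the largest quotient ring of $R$, containing $R$. The same constructions apply to any ring, e.g. $Q(R)$. *)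

From HB Require Import structures.
From mathcomp Require Import all_boot all_order all_algebra.
Set Implicit Arguments. Unset Strict Implicit. Unset Printing Implicit Defensive.
Import GRing.Theory.
Local Open Scope ring_scope.

Section Den.
Variable R : nzRingType.

Definition mult_closed_set (S : R -> Prop) : Prop :=
  S 1 /\ ~ S 0 /\ (forall x y, S x -> S y -> S (x * y)).

Definition left_ore (S : R -> Prop) : Prop :=
  forall r s, S s -> exists s' r', S s' /\ s' * r = r' * s.

Definition right_ore (S : R -> Prop) : Prop :=
  forall r s, S s -> exists s' r', S s' /\ r * s' = s * r'.

Definition left_den (S : R -> Prop) : Prop :=
  mult_closed_set S /\ left_ore S /\
  (forall r s, S s -> r * s = 0 -> exists t, S t /\ t * r = 0).

Definition right_den (S : R -> Prop) : Prop :=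
  mult_closed_set S /\ right_ore S /\
  (forall r s, S s -> s * r = 0 -> exists t, S t /\ r * t = 0).

Definition regular (x : R) : Prop :=
  forall y, (x * y = 0 -> y = 0) /\ (y * x = 0 -> y = 0).

Definition Den0 (S : R -> Prop) : Prop :=
  left_den S /\ right_den S /\ (forall x, S x -> regular x).

(* S_0(R): the largest element of Den(R,0), i.e. the union of all its
   elements (the paper shows this union belongs to Den(R,0)). *)
Definition S0 : R -> Prop := fun x => exists S, Den0 S /\ S x.

Definition is_inv (x u : R) : Prop := x * u = 1 /\ u * x = 1.
Definition is_unit (x : R) : Prop := exists u, is_inv x u.

Inductive gen_group (A : R -> Prop) : R -> Prop :=
| gg_in x : A x -> gen_group A x
| gg_one : gen_group A 1
| gg_mul x y : gen_group A x -> gen_group A y -> gen_group A (x * y)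
| gg_inv x y : gen_group A x -> is_inv x y -> gen_group A y.

End Den.

(* [f : R -> Q] presents Q as the (left and right) quotient ring
   S^{-1}R = RS^{-1} of R at S (standard characterization, unique up to
   isomorphism): images of S are units, every element is f(s)^{-1} f(r)
   and also f(r) f(s)^{-1}, and the kernel is the S-torsion. *)
Definition is_left_quotient (R Q : nzRingType) (S : R -> Prop)
  (f : {rmorphism R -> Q}) : Prop :=
  (forall s, S s -> is_unit (f s)) /\
  (forall q, exists s r u, S s /\ is_inv (f s) u /\ q = u * f r) /\
  (forall r, f r = 0 <-> exists s, S s /\ s * r = 0).

Definition is_right_quotient (R Q : nzRingType) (S : R -> Prop)
  (f : {rmorphism R -> Q}) : Prop :=
  (forall s, S s -> is_unit (f s)) /\
  (forall q, exists s r u, S s /\ is_inv (f s) u /\ q = f r * u) /\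
  (forall r, f r = 0 <-> exists s, S s /\ r * s = 0).

Definition is_quotient (R Q : nzRingType) (S : R -> Prop)
  (f : {rmorphism R -> Q}) : Prop :=
  is_left_quotient S f /\ is_right_quotient S f.

From HB Require Import structures.
From mathcomp Require Import all_boot all_order all_algebra.
From Stdlib Require Import ClassicalEpsilon.
Set Implicit Arguments. Unset Strict Implicit. Unset Printing Implicit Defensive.
Import GRing.Theory.
Local Open Scope ring_scope.

(* The units of any ring form a denominator set of regular elements, so
   Q(R)^* is contained in S_0(Q(R)).  Conversely, if T is in Den(Q(R),0),
   then the preimage in R of the multiplicative closure of T and Q(R)^* is
   in Den(R,0), hence inside S_0(R).  Writing q in T as f(s)^{-1} f(t), the
   element f(t) = f(s) q lies in that closure, so t is in S_0(R), f(t) is a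
   unit, and so is q.  This gives (1) and the fraction forms (2), (3); for
   (4), localizing at a set of units is an isomorphism. *)

Section Units.
Variable Q : nzRingType.

Lemma is_inv_sym (x u : Q) : is_inv x u -> is_inv u x.
Proof. by case. Qed.

Lemma is_inv_unit (x u : Q) : is_inv x u -> is_unit u.
Proof. by move/is_inv_sym; exists x. Qed.

Lemma is_unit1 : is_unit (1 : Q).
Proof. by exists 1; rewrite /is_inv mulr1. Qed.

Lemma is_unitM (x y : Q) : is_unit x -> is_unit y -> is_unit (x * y).
Proof.
case=> u [xu ux] [v [yv vy]]; exists (v * u); split.
- by rewrite mulrA -(mulrA x) yv mulr1 xu.
- by rewrite mulrA -(mulrA v) ux mulr1 vy.
Qed.

Lemma is_inv_mulKr (x u y : Q) : is_inv x u -> x * (u * y) = y.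
Proof. by case=> xu _; rewrite mulrA xu mul1r. Qed.

Lemma is_inv_mulrK (x u y : Q) : is_inv x u -> y * u * x = y.
Proof. by case=> _ ux; rewrite -mulrA ux mulr1. Qed.

Lemma unit_regular (x : Q) : is_unit x -> regular x.
Proof.
case=> u [xu ux] y; split=> xy0.
- by rewrite -[y]mul1r -ux -mulrA xy0 mulr0.
- by rewrite -[y]mulr1 -xu mulrA xy0 mul0r.
Qed.

Lemma regular_neq0 (x : Q) : regular x -> x <> 0.
Proof.
move=> xreg x0; have x10 : x * 1 = 0 by rewrite x0 mul0r.
by have := oner_neq0 Q; rewrite ((xreg 1).1 x10) eqxx.
Qed.

Lemma regularM (x y : Q) : regular x -> regular y -> regular (x * y).
Proof.
move=> xreg yreg z; split=> xyz0.
- by apply: (yreg z).1; apply: (xreg (y * z)).1; rewrite mulrA.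
- by apply: (xreg z).2; apply: (yreg (z * x)).2; rewrite -mulrA.
Qed.

(* For regular elements the torsion conditions of a denominator set are
   automatic: only closure and the two Ore conditions remain. *)
Lemma regular_ore_Den0 (S : Q -> Prop) :
  S 1 -> (forall x y, S x -> S y -> S (x * y)) ->
  left_ore S -> right_ore S -> (forall x, S x -> regular x) -> Den0 S.
Proof.
move=> S1 SM lS rS Sreg.
have S_mult : mult_closed_set S.
  by split=> //; split=> // /Sreg /regular_neq0.
split; [|split=> //]; split=> //; split=> // r s /Sreg sreg rs0;
  exists 1; split=> //.
- by rewrite mul1r; apply: (sreg r).2.
- by rewrite mulr1; apply: (sreg r).1.
Qed.

Lemma units_left_ore : left_ore (@is_unit Q).
Proof.
move=> r s [u su]; exists 1, (r * u); split; first exact: is_unit1.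
by rewrite mul1r is_inv_mulrK.
Qed.

Lemma units_right_ore : right_ore (@is_unit Q).
Proof.
move=> r s [u su]; exists 1, (u * r); split; first exact: is_unit1.
by rewrite mulr1 is_inv_mulKr.
Qed.

Lemma units_Den0 : Den0 (@is_unit Q).
Proof.
apply: regular_ore_Den0; [exact: is_unit1 | exact: is_unitM |
  exact: units_left_ore | exact: units_right_ore | exact: unit_regular].
Qed.

Lemma unit_S0 (q : Q) : is_unit q -> S0 q.
Proof. by move=> qU; exists (@is_unit Q); split=> //; exact: units_Den0. Qed.

Lemma S0_regular (x : Q) : S0 x -> regular x.
Proof. by case=> S [[_ [_ Sreg]] Sx]; apply: Sreg. Qed.

Lemma gen_group_units (A : Q -> Prop) (q : Q) :
  (forall x, A x -> is_unit x) -> gen_group A q -> is_unit q.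
Proof.
move=> AU; elim=> [x /AU | | x y _ xU _ yU | x y _ xU xy] //.
- exact: is_unit1.
- exact: is_unitM.
- exact: is_inv_unit xy.
Qed.

Inductive unit_closure (T : Q -> Prop) : Q -> Prop :=
| uc_in x : T x -> unit_closure T x
| uc_unit x : is_unit x -> unit_closure T x
| uc_mul x y : unit_closure T x -> unit_closure T y -> unit_closure T (x * y).

Lemma unit_closure_left_ore (T : Q -> Prop) :
  left_ore T -> left_ore (unit_closure T).
Proof.
move=> lT r s sT; elim: sT r => [x xT | x xU | x y _ IHx _ IHy] r.
- by have [s' [r' [s'T E]]] := lT r x xT; exists s', r'; split; first exact: uc_in.
- by have [s' [r' [s'U E]]] := units_left_ore r xU; exists s', r'; split;
    first exact: uc_unit.
- have [s1 [r1 [s1T E1]]] := IHy r; have [s2 [r2 [s2T E2]]] := IHx r1.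
  exists (s2 * s1), r2; split; first exact: uc_mul.
  by rewrite -mulrA E1 mulrA E2 mulrA.
Qed.

Lemma unit_closure_right_ore (T : Q -> Prop) :
  right_ore T -> right_ore (unit_closure T).
Proof.
move=> rT r s sT; elim: sT r => [x xT | x xU | x y _ IHx _ IHy] r.
- by have [s' [r' [s'T E]]] := rT r x xT; exists s', r'; split; first exact: uc_in.
- by have [s' [r' [s'U E]]] := units_right_ore r xU; exists s', r'; split;
    first exact: uc_unit.
- have [s1 [r1 [s1T E1]]] := IHx r; have [s2 [r2 [s2T E2]]] := IHy r1.
  exists (s1 * s2), r2; split; first exact: uc_mul.
  by rewrite mulrA E1 -mulrA E2 mulrA.
Qed.

Lemma unit_closure_Den0 (T : Q -> Prop) : Den0 T -> Den0 (unit_closure T).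
Proof.
move=> [[_ [lT _]] [[_ [rT _]] Treg]].
apply: regular_ore_Den0.
- exact/uc_unit/is_unit1.
- exact: uc_mul.
- exact: unit_closure_left_ore.
- exact: unit_closure_right_ore.
- by move=> x; elim=> [y /Treg | y /unit_regular | y z _ ? _ ?] //; exact: regularM.
Qed.

End Units.

Lemma regular_of_image (R Q : nzRingType) (f : {rmorphism R -> Q}) (r : R) :
  injective f -> regular (f r) -> regular r.
Proof.
move=> finj freg y; split=> ry0; apply: finj; rewrite rmorph0.
- by apply: (freg (f y)).1; rewrite -rmorphM ry0 rmorph0.
- by apply: (freg (f y)).2; rewrite -rmorphM ry0 rmorph0.
Qed.

Lemma left_quotient_inj (R Q : nzRingType) (S : R -> Prop)
    (f : {rmorphism R -> Q}) :
  (forall s, S s -> regular s) -> is_left_quotient S f -> injective f.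
Proof.
move=> Sreg [_ [_ fker]] x y fxy; apply/eqP; rewrite -subr_eq0; apply/eqP.
have /fker [s [sS sxy0]] : f (x - y) = 0 by rewrite rmorphB fxy subrr.
exact: (Sreg s sS _).1.
Qed.

Lemma left_quotient_at_units_bijective (R Q : nzRingType) (S : R -> Prop)
    (g : {rmorphism R -> Q}) :
  (forall s, S s -> is_unit s) -> is_left_quotient S g -> bijective g.
Proof.
move=> SU gq; have [gU [gl _]] := gq.
have ginj := left_quotient_inj (fun s sS => unit_regular (SU s sS)) gq.
have gsurj q : {x | g x = q}.
  apply: constructive_indefinite_description.
  have [s [r [u [sS [gsu qE]]]]] := gl q.
  have [v sv] := SU s sS.
  have gvu : g v = u.
    by rewrite -[g v]mulr1 -gsu.1 mulrA -rmorphM sv.2 rmorph1 mul1r.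
  by exists (v * r); rewrite rmorphM gvu qE.
exists (fun q => proj1_sig (gsurj q)) => [x | q]; last exact: (proj2_sig (gsurj q)).
by apply: ginj; rewrite (proj2_sig (gsurj (g x))).
Qed.

Section Quotient.
Variables (R Q : nzRingType) (S : R -> Prop) (f : {rmorphism R -> Q}).
Hypothesis S_regular : forall s, S s -> regular s.
Hypotheses (fl : is_left_quotient S f) (fr : is_right_quotient S f).

Let f_inj : injective f := left_quotient_inj S_regular fl.

Lemma preimage_unit_closure_left_ore (T : Q -> Prop) :
  left_ore T -> left_ore (fun r => unit_closure T (f r)).
Proof.
move=> /unit_closure_left_ore lT r s /(lT (f r)) [g [q [gT Eg]]].
have [s1 [b [u1 [s1S [fs1u1 qE]]]]] := fl.2.1 q.
rewrite {}qE in Eg.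
have [c [a [u [cS [fcu Ea]]]]] := fl.2.1 (f s1 * g).
have fa : f a = f c * (f s1 * g) by rewrite Ea is_inv_mulKr.
exists a, (c * b); split=> /=.
- rewrite fa; apply: uc_mul; first by apply/uc_unit/fl.1.
  by apply: uc_mul => //; apply/uc_unit/fl.1.
- apply: f_inj; rewrite !rmorphM fa -!mulrA; congr (_ * _).
  by rewrite Eg -mulrA is_inv_mulKr.
Qed.

Lemma preimage_unit_closure_right_ore (T : Q -> Prop) :
  right_ore T -> right_ore (fun r => unit_closure T (f r)).
Proof.
move=> /unit_closure_right_ore rT r s /(rT (f r)) [g [q [gT Eg]]].
have [s1 [b [u1 [s1S [fs1u1 qE]]]]] := fr.2.1 q.
rewrite {}qE in Eg.
have [c [a [u [cS [fcu Ea]]]]] := fr.2.1 (g * f s1).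
have fa : f a = g * f s1 * f c by rewrite Ea is_inv_mulrK.
exists a, (b * c); split=> /=.
- rewrite fa; apply: uc_mul; last by apply/uc_unit/fr.1.
  by apply: uc_mul => //; apply/uc_unit/fr.1.
- apply: f_inj; rewrite !rmorphM fa !mulrA; congr (_ * _).
  by rewrite Eg mulrA is_inv_mulrK.
Qed.

Lemma preimage_unit_closure_Den0 (T : Q -> Prop) :
  Den0 T -> Den0 (fun r => unit_closure T (f r)).
Proof.
move=> DT; have [[_ [lT _]] [[_ [rT _]] _]] := DT.
have [_ [_ UTreg]] := unit_closure_Den0 DT.
apply: regular_ore_Den0 => /=.
- by rewrite rmorph1; apply/uc_unit/is_unit1.
- by move=> x y xT yT; rewrite rmorphM; exact: uc_mul.
- exact: preimage_unit_closure_left_ore.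
- exact: preimage_unit_closure_right_ore.
- by move=> x /UTreg; exact: regular_of_image.
Qed.

Lemma S0_of_image (r : R) : S0 (f r) -> S0 r.
Proof.
case=> T [DT frT]; exists (fun r => unit_closure T (f r)).
by split; [exact: preimage_unit_closure_Den0 | exact: uc_in].
Qed.

Lemma S0_left_fraction (q : Q) : S0 q ->
  exists s t u, S s /\ S0 t /\ is_inv (f s) u /\ q = u * f t.
Proof.
move=> qS0; have [s [t [u [sS [fsu qE]]]]] := fl.2.1 q.
exists s, t, u; do 2!split=> //; apply: S0_of_image.
case: qS0 => T [DT qT]; exists (unit_closure T).
split; first exact: unit_closure_Den0.
rewrite -(is_inv_mulKr (f t) fsu) -qE.
by apply: uc_mul; [apply/uc_unit/fl.1 | apply: uc_in].
Qed.

Lemma S0_right_fraction (q : Q) : S0 q ->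
  exists s t u, S s /\ S0 t /\ is_inv (f s) u /\ q = f t * u.
Proof.
move=> qS0; have [s [t [u [sS [fsu qE]]]]] := fr.2.1 q.
exists s, t, u; do 2!split=> //; apply: S0_of_image.
case: qS0 => T [DT qT]; exists (unit_closure T).
split; first exact: unit_closure_Den0.
rewrite -(is_inv_mulrK (f t) fsu) -qE.
by apply: uc_mul; [apply: uc_in | apply/uc_unit/fr.1].
Qed.

End Quotient.

Theorem theorem4p4 (R Q : nzRingType) (f : {rmorphism R -> Q})
  (hQ : is_quotient (@S0 R) f) :
  (* (1) *)
  ((forall q : Q, @S0 Q q <-> is_unit q) /\
   (forall r : R, @S0 Q (f r) <-> @S0 R r)) /\
  (* (2) *)
  (forall q : Q, is_unit q <->
     gen_group (fun x : Q => exists s, @S0 R s /\ (x = f s \/ is_inv (f s) x)) q) /\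
  (* (3) *)
  (forall q : Q, is_unit q <->
     exists s t u, @S0 R s /\ @S0 R t /\ is_inv (f s) u /\ q = u * f t) /\
  (forall q : Q, is_unit q <->
     exists s t u, @S0 R s /\ @S0 R t /\ is_inv (f s) u /\ q = f t * u) /\
  (* (4) Q(Q(R)) = Q(R): the canonical map Q(R) -> Q(Q(R)) is bijective *)
  (forall (Q' : nzRingType) (g : {rmorphism Q -> Q'}),
     is_quotient (@S0 Q) g -> bijective g).
Proof.
have [fl fr] := hQ; have fU : forall s, S0 s -> is_unit (f s) := fl.1.
have left_frac := S0_left_fraction (@S0_regular R) fl fr.
have right_frac := S0_right_fraction (@S0_regular R) fl fr.
have unit_left_frac q : is_unit q <->
    exists s t u, S0 s /\ S0 t /\ is_inv (f s) u /\ q = u * f t.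
  split=> [/unit_S0/left_frac // | [s [t [u [_ [tS [/is_inv_unit uU ->]]]]]]].
  exact: is_unitM uU (fU t tS).
have unit_right_frac q : is_unit q <->
    exists s t u, S0 s /\ S0 t /\ is_inv (f s) u /\ q = f t * u.
  split=> [/unit_S0/right_frac // | [s [t [u [_ [tS [/is_inv_unit uU ->]]]]]]].
  exact: is_unitM (fU t tS) uU.
have S0_unit (q : Q) : S0 q <-> is_unit q.
  by split=> [/left_frac ? | /unit_S0 //]; apply/unit_left_frac.
split.
  split=> // r; split=> [/(S0_of_image (@S0_regular R) fl fr) ? | /fU/unit_S0 ?] //.
split.
  move=> q; split.
  - case/unit_left_frac=> s [t [u [sS [tS [fsu ->]]]]].
    apply: gg_mul; apply: gg_in; first by exists s; split; last right.
    by exists t; split; last left.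
  - apply: gen_group_units => x [s [sS [-> | /is_inv_unit //]]]; exact: fU.
split=> //; split=> // Q' g [gl _].
exact: left_quotient_at_units_bijective (fun q => (S0_unit q).1) gl.
Qed.
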